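(* Let $n$, $q\ge2$ be integers and $a\in[1:n]$, $\nu=\lceil(n+1)/a\rceil$. Suppose $\mathbf{l}=(l_1,\dots,l_{q-1})$ and $\mathbf{l}'=(l_1',\dots,l_{q-1}')$ are adjacent elements of $V=\{\mathbf{m}\in[1:\nu]^{q-1}:\sum_im_i\le\frac na+q-1\}$. Then every $\mathbf{t}\in C_{\mathbf{l}}$ and $\mathbf{t}'\in C_{\mathbf{l}'}$ satisfy $d_{\mathrm c}(\mathbf{t},\mathbf{t}')\le\frac a2(2q+1)$.
   Context: $\mathcal{N}_{q,n}=\{\mathbf{t}\in\mathbb{Z}_{\ge0}^q:\sum t_i=n\}$; $C_{\mathbf{l}}=\{\mathbf{t}\in\mathcal{N}_{q,n}:(l_i-1)a\le t_i\le l_ia-1\ \forall i\in[1:q-1]\}$. Two distinct $\mathbf{l},\mathbf{l}'$ are adjacent if either all coordinates agree except one, where they differ by exactly $1$, or all coordinates agree except two indexed by $k,j$, where $l_k=l_k'+1$ and $l_j=l_j'-1$. $d_{\mathrm c}(\mathbf{t},\mathbf{t}')=\frac12\sum_{i=1}^q|t_i-t_i'|$. *)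

From mathcomp Require Import all_boot all_order all_algebra.
Set Implicit Arguments. Unset Strict Implicit. Unset Printing Implicit Defensive.
Import Order.TTheory GRing.Theory Num.Theory.
Local Open Scope ring_scope.

Definition in_Nqn (q n : nat) (t : 'I_q -> nat) : Prop :=
  (\sum_(i < q) t i)%N = n.

(* The inequalities are taken in int to avoid truncated subtraction. *)
Definition in_C (q n a : nat) (l : 'I_q.-1 -> nat) (t : 'I_q -> nat) : Prop :=
  in_Nqn n t /\
  forall i : 'I_q.-1,
    ((l i)%:Z - 1) * a%:Z <= (t (widen_ord (leq_pred q) i))%:Z /\
    (t (widen_ord (leq_pred q) i))%:Z <= (l i)%:Z * a%:Z - 1.

Definition adjacent (k : nat) (l l' : 'I_k -> nat) : Prop :=
  (exists i, l i <> l' i) /\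
  ((exists j : 'I_k, (forall i, i != j -> l i = l' i) /\
       ((l j = (l' j).+1) \/ (l' j = (l j).+1)))
   \/
   (exists kk j : 'I_k, kk != j /\ (forall i, i != kk -> i != j -> l i = l' i) /\
       l kk = (l' kk).+1 /\ l' j = (l j).+1)).

(* nu = ceil((n+1)/a), for a >= 1 *)
Definition nu (n a : nat) : nat := ((n + a) %/ a)%N.

Definition in_V (q n a : nat) (m : 'I_q.-1 -> nat) : Prop :=
  (forall i, 1 <= m i <= nu n a)%N /\
  ((\sum_(i < q.-1) m i)%:R : rat) <= (n%:R / a%:R) + q%:R - 1.

Definition dc (q : nat) (t t' : 'I_q -> nat) : rat :=
  2^-1 * \sum_(i < q) `|(t i)%:R - (t' i)%:R|.

From mathcomp Require Import all_boot all_order all_algebra zify.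
Import Order.TTheory GRing.Theory Num.Theory.
Set Implicit Arguments. Unset Strict Implicit. Unset Printing Implicit Defensive.
Local Open Scope ring_scope.

(* For i < q, the coordinate t_i lies in the block [(l_i - 1) a, l_i a - 1], so
   t_i - t'_i equals (l_i - l'_i) a up to an error of at most a - 1.  Adjacency
   gives sum_i |l_i - l'_i| <= 2 and |sum_i (l_i - l'_i)| <= 1, while the last
   coordinate is forced by the others: t_q - t'_q = - sum_(i<q) (t_i - t'_i).
   Hence 2 d_c(t, t') <= 2a + a + 2 (q - 1) (a - 1) <= a (2q + 1). *)

Lemma ler_sum_norm_near (R : numDomainType) (I : finType) (x y : I -> R) (e : R) :
  (forall i, `|x i - y i| <= e) -> \sum_i `|x i| <= \sum_i `|y i| + e *+ #|I|.
Proof.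
move=> xy; rewrite -sumr_const -big_split /=; apply: ler_sum => i _.
rewrite -[x i](subrK (y i)); apply: le_trans (ler_normD _ _) _.
by rewrite [leRHS]addrC lerD2r.
Qed.

Lemma ler_norm_sum_near (R : numDomainType) (I : finType) (x y : I -> R) (e : R) :
  (forall i, `|x i - y i| <= e) -> `|\sum_i x i| <= `|\sum_i y i| + e *+ #|I|.
Proof.
move=> xy; rewrite -lerBlDl -sumr_const; apply: le_trans (lerB_dist _ _) _.
rewrite -sumrB; apply: le_trans (ler_norm_sum _ _ _) _.
exact: ler_sum.
Qed.

Lemma sum_support1 (R : nmodType) (I : finType) (j : I) (F : I -> R) :
  (forall i, i != j -> F i = 0) -> \sum_i F i = F j.
Proof. by move=> F0; rewrite (bigD1 j) //= big1 ?addr0. Qed.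

Lemma sum_support2 (R : nmodType) (I : finType) (i0 j : I) (F : I -> R) : i0 != j ->
  (forall i, i != i0 -> i != j -> F i = 0) -> \sum_i F i = F i0 + F j.
Proof.
move=> i0j F0; rewrite (bigD1 i0) //= (bigD1 j) 1?eq_sym //= big1 ?addr0 //.
by move=> i /andP[? ?]; apply: F0.
Qed.

Lemma big_ord_recr_pred (R : nmodType) k (F : 'I_k.+1 -> R) :
  \sum_(i < k.+1) F i = \sum_(i < k) F (widen_ord (leq_pred k.+1) i) + F ord_max.
Proof. by rewrite big_ord_recr; congr (_ + _); apply: eq_bigr => i _; congr F; apply: val_inj. Qed.

Lemma adjacent_diff_bounds k (l l' : 'I_k -> nat) : adjacent l l' ->
  \sum_i `|(l i)%:Z - (l' i)%:Z| <= 2 /\ `|\sum_i ((l i)%:Z - (l' i)%:Z)| <= 1.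
Proof.
case=> _ [[j [eq_l l_j]] | [i0 [j [i0j [eq_l [l_i0 l_j]]]]]].
- have diff0 i : i != j -> (l i)%:Z - (l' i)%:Z = 0 by move/eq_l->; rewrite subrr.
  have norm_diff0 i : i != j -> `|(l i)%:Z - (l' i)%:Z| = 0 by move/diff0->.
  rewrite (sum_support1 norm_diff0) (sum_support1 diff0).
  by case: l_j => ->; split; lia.
- have diff0 i : i != i0 -> i != j -> (l i)%:Z - (l' i)%:Z = 0.
    by move=> ? ?; rewrite eq_l ?subrr.
  have norm_diff0 i : i != i0 -> i != j -> `|(l i)%:Z - (l' i)%:Z| = 0.
    by move=> ? ?; rewrite diff0.
  rewrite (sum_support2 i0j norm_diff0) (sum_support2 i0j diff0) l_i0 l_j.
  by split; lia.
Qed.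

Lemma block_diff_near (a l l' t t' : int) :
  (l - 1) * a <= t -> t <= l * a - 1 -> (l' - 1) * a <= t' -> t' <= l' * a - 1 ->
  `|(t - t') - (l - l') * a| <= a - 1.
Proof. by move=> *; rewrite ler_norml; apply/andP; split; lia. Qed.

Lemma in_Nqn_diff_last n k (t t' : 'I_k.+1 -> nat) : in_Nqn n t -> in_Nqn n t' ->
  (t ord_max)%:Z - (t' ord_max)%:Z =
  - \sum_(i < k) ((t (widen_ord (leq_pred k.+1) i))%:Z
                  - (t' (widen_ord (leq_pred k.+1) i))%:Z).
Proof.
move=> Nt Nt'; apply/eqP; rewrite -addr_eq0 addrC.
rewrite -(big_ord_recr_pred (fun i => (t i)%:Z - (t' i)%:Z)) /= sumrB.
by rewrite -!(big_morph _ PoszD (erefl 0%:Z)) Nt Nt' subrr.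
Qed.

Section AdjacentCells.

Variables (n k a : nat) (l l' : 'I_k -> nat) (t t' : 'I_k.+1 -> nat).
Hypotheses (Ct : in_C (q := k.+1) n a l t) (Ct' : in_C (q := k.+1) n a l' t').

Let w (i : 'I_k) : 'I_k.+1 := widen_ord (leq_pred k.+1) i.
Let D i := (t (w i))%:Z - (t' (w i))%:Z.
Let d i := ((l i)%:Z - (l' i)%:Z) * a%:Z.

Let D_near i : `|D i - d i| <= a%:Z - 1.
Proof. have [_ /(_ i) [? ?]] := Ct; have [_ /(_ i) [? ?]] := Ct'; exact: block_diff_near. Qed.

Lemma adjacent_cells_sum_dist_le : adjacent l l' ->
  \sum_(i < k.+1) `|(t i)%:Z - (t' i)%:Z| <= (a * (2 * k.+1 + 1))%N.
Proof.
move=> adj; have [sum_le2 sum_le1] := adjacent_diff_bounds adj.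
have sum_norm_d : \sum_i `|d i| <= 2 * a%:Z.
  by under eq_bigr do rewrite normrM; rewrite -mulr_suml ler_wpM2r.
have norm_sum_d : `|\sum_i d i| <= a%:Z.
  by rewrite -mulr_suml normrM -[leRHS]mul1r ler_wpM2r.
have [[Nt _] [Nt' _]] := (Ct, Ct').
rewrite big_ord_recr_pred /= (in_Nqn_diff_last Nt Nt') normrN.
have := ler_sum_norm_near D_near; have := ler_norm_sum_near D_near.
rewrite card_ord -[(a%:Z - 1) *+ k]mulr_natr natz.
move: sum_norm_d norm_sum_d.
set X := \sum_(i < k) `|D i|; set Y := `|\sum_(i < k) D i|.
set P := \sum_(i < k) `|d i|; set Q := `|\sum_(i < k) d i|.
lia.
Qed.

End AdjacentCells.

Lemma dcE q (t t' : 'I_q -> nat) :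
  dc t t' = 2^-1 * (\sum_i `|(t i)%:Z - (t' i)%:Z|)%:~R.
Proof.
by rewrite /dc rmorph_sum; congr (_ * _); apply: eq_bigr => i _; rewrite /= intr_norm intrB.
Qed.

Theorem lemma13 (n q a : nat) (hq : (2 <= q)%N) (ha1 : (1 <= a)%N) (han : (a <= n)%N)
  (l l' : 'I_q.-1 -> nat) (t t' : 'I_q -> nat) :
  in_V n a l -> in_V n a l' -> adjacent l l' ->
  in_C n a l t -> in_C n a l' t' ->
  dc t t' <= (a%:R / 2) * (2 * q + 1)%:R.
Proof.
move=> _ _ adj Ct Ct'.
case: q hq l l' t t' adj Ct Ct' => // k _ l l' t t' adj Ct Ct'.
rewrite dcE mulrAC -natrM mulrC ler_pM2r ?invr_gt0 //.
rewrite -[(_ * _)%:R]/(((a * (2 * k.+1 + 1))%N%:Z)%:~R) ler_int.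
exact: adjacent_cells_sum_dist_le Ct Ct' adj.
Qed.
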